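(* Let $G$ be a planar PCC graph, $\sigma$ a face with $|\sigma|=N\ge42$, and let $A_1,A_5,A_6,\mathcal T,C_1$ and $\tau_v$ ($v\in C_1$) be as in the context. Define $C_{15}=\{v\in C_1:\ \tau_v\text{ has vertices }v,v_1,v_2\text{ with }v_1\in A_1,\ v_2\in A_5\}$, $C_{16}=\{v\in C_1:\ \tau_v\text{ has vertices }v,v_1,v_2\text{ with }v_1\in A_1,\ v_2\in A_6\}$, and let $D$ be the set of vertices $v$ for which there exists $v'\in C_{16}$ adjacent to $v$ such that the two faces on either side of the edge $vv'$ have sizes $5$ and $6$. Then $C_1\cap D\subseteq C_{15}$.
   Context: $G$ is a finite simple connected graph 2-cell embedded in the sphere; $|\sigma|$ is the boundary walk length of face $\sigma$; $f(v)$ is the multiset of sizes of faces incident to $v$ (one per corner), in nondecreasing order; $K(v)=1-\frac{\deg(v)}{2}+\sum_{\sigma\in F(v)}\frac1{|\sigma|}$. A prism (resp. antiprism) of order $N$ is the planar graph with $2N$ vertices, two $N$-faces and $N$ quadrilaterals (resp. $2N$ triangles), each vertex incident to two quadrilaterals and one $N$-face (resp. three triangles and one $N$-face). A planar PCC graph is such a $G$ with $K(v)>0$, $\deg(v)\ge3$ for all $v$, not a prism or antiprism. Given the face $\sigma$ with $|\sigma|=N$: $A_1,A_5,A_6$ are the sets of vertices $v$ on the boundary of $\sigma$ with $f(v)=(3,3,3,N)$, $(3,5,N)$, $(3,6,N)$ respectively; $\mathcal T$ is the set of triangles whose vertex set is $\{v,v_1,v_2\}$ with $v_1,v_2\in A_1\cup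 A_5\cup A_6$; $C_1$ is the set of vertices not on the boundary of $\sigma$ lying on some triangle of $\mathcal T$. For each $v\in C_1$ there is a unique $\tau_v\in\mathcal T$ containing $v$. *)

(* Plane graphs are encoded as combinatorial maps (rotation systems). *)
From HB Require Import structures.
From mathcomp Require Import all_boot all_order all_algebra all_fingroup.
Set Implicit Arguments. Unset Strict Implicit. Unset Printing Implicit Defensive.
Import Order.TTheory GRing.Theory Num.Theory.

Section Map.
(* Darts D; [ne] rotates the darts around their common vertex (cyclic order of
   the embedding); [ed] is the fixed-point-free involution exchanging the two
   darts (half-edges) of an edge.  Vertices = orbits of [ne], edges = orbits of
   [ed], faces = orbits of [phi := ne \o ed] (standard face permutation).
   A vertex is represented by any of its darts. *)
Variables (D : finType) (ne ed : {perm D}).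

Definition phi (x : D) : D := ne (ed x).

Definition sameV (x y : D) : bool := fconnect ne x y.
Definition inFace (x y : D) : bool := fconnect phi x y.

Definition deg (v : D) : nat := fingraph.order ne v.
Definition fsize (x : D) : nat := fingraph.order phi x.
Definition fmult (v : D) : seq nat := [seq fsize x | x <- fingraph.orbit ne v].

Definition curv (v : D) : rat :=
  (1 - (deg v)%:R / 2 + \sum_(x <- fingraph.orbit ne v) ((fsize x)%:R)^-1)%R.

Definition nverts : nat := fcard ne D.
Definition nedges : nat := fcard ed D.
Definition nfaces : nat := fcard phi D.

Definition simple_connected_spherical_map : Prop :=
  [/\ (forall x, ed (ed x) = x) /\ (forall x, ed x != x),
      (forall x, ~~ sameV x (ed x)),
      (forall x y, sameV x y -> sameV (ed x) (ed y) -> x = y),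
      (forall x y, connect (fun a b => (b == ed a) || (b == ne a)) x y)
    & (* genus 0 (Euler's formula) *)
      nverts + nfaces = nedges + 2].

Definition is_prism : Prop :=
  exists N, [/\ 3 <= N, nverts = 2 * N & forall v, perm_eq (fmult v) [:: 4; 4; N]].
Definition is_antiprism : Prop :=
  exists N, [/\ 3 <= N, nverts = 2 * N & forall v, perm_eq (fmult v) [:: 3; 3; 3; N]].

Definition planar_PCC : Prop :=
  [/\ simple_connected_spherical_map,
      (forall v, (0 < curv v)%R /\ 3 <= deg v),
      ~ is_prism & ~ is_antiprism].

(* The distinguished face sigma is represented by one of its darts s. *)
Variable s : D.
Let N := fsize s.

Definition onSigma (v : D) : Prop := exists x, sameV v x /\ inFace s x.

Definition A1 (v : D) : Prop := onSigma v /\ perm_eq (fmult v) [:: 3; 3; 3; N].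
Definition A5 (v : D) : Prop := onSigma v /\ perm_eq (fmult v) [:: 3; 5; N].
Definition A6 (v : D) : Prop := onSigma v /\ perm_eq (fmult v) [:: 3; 6; N].
Definition A156 (v : D) : Prop := A1 v \/ A5 v \/ A6 v.

Definition inT (t : D) : Prop :=
  fsize t = 3 /\
  exists a b, [/\ inFace t a, inFace t b, ~~ sameV a b, A156 a & A156 b].

Definition faceHasV (t v : D) : Prop := exists c, inFace t c /\ sameV c v.

Definition C1 (v : D) : Prop := ~ onSigma v /\ exists t, inT t /\ faceHasV t v.

(* tau_v (the unique triangle of T containing v) has its two other vertices
   in A1 and A5 (resp. A6) *)
Definition C15 (v : D) : Prop :=
  C1 v /\ forall t, inT t -> faceHasV t v ->
    exists a b, [/\ inFace t a, inFace t b, A1 a & A5 b].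
Definition C16 (v : D) : Prop :=
  C1 v /\ exists t, [/\ inT t, faceHasV t v &
    exists a b, [/\ inFace t a, inFace t b, A1 a & A6 b]].

Definition Dset (v : D) : Prop :=
  exists x, [/\ sameV v x, C16 (ed x) &
    ((fsize x == 5) && (fsize (ed x) == 6)) || ((fsize x == 6) && (fsize (ed x) == 5))].

End Map.

From Pilot Require Import Defs.
From mathcomp Require Import all_boot all_order all_algebra all_fingroup.
From mathcomp Require Import lra zify.
Import Order.TTheory GRing.Theory Num.Theory.

Set Implicit Arguments.
Unset Strict Implicit.
Unset Printing Implicit Defensive.

(* Positive curvature next to a face sigma of size N >= 42 is very restrictive:
   vertices have degree at most 5, no vertex sees faces of size >= 42 at two
   corners two apart, and a vertex where such a face meets a hexagon has degree
   3 with a triangle as third face.  Hence, at a corner u of tau_v lying on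
   sigma, the face beyond the edge uv (v is off sigma) is a triangle, pentagon
   or hexagon according as u is in A1, A5 or A6.  Curvature at v forces an edge
   with sides 5 and 6 to be one of the two edges next to tau_v; the same holds
   at v', whose triangle is flanked by a triangle and a hexagon H, so H is the
   hexagon side of vv'.  If tau_v were also flanked by H, then H would meet
   sigma along two edges separated by a third one, and the vertex opposite the
   triangle shared by the two vertices in between would see sigma at two
   corners two apart.  So tau_v is flanked by a triangle and a pentagon: its
   vertices on sigma lie in A1 and A5. *)

Arguments fsize : simpl never.
Arguments deg : simpl never.

Lemma order_fconnect (T : finType) (f : T -> T) x y :
  injective f -> fconnect f x y -> fingraph.order f y = fingraph.order f x.
Proof.
move=> injf xy; apply: (eq_order_cycle (cycle_orbit injf x)); first exact: in_orbit.
by rewrite -fconnect_orbit.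
Qed.

Lemma natr_mulV_le1 (m n : nat) :
  (m <= n)%N -> (0 < m)%N -> (m%:R * n%:R^-1 <= 1 :> rat)%R.
Proof.
move=> le_mn m_gt0; have n_gt0 : (0 < n)%N := leq_trans m_gt0 le_mn.
by rewrite mulrC ler_pdivrMl ?ltr0n // mulr1 ler_nat.
Qed.

Section CombinatorialMap.
Variables (D : finType) (ne ed : {perm D}).

Local Notation phi := (Defs.phi ne ed).
Local Notation fsize := (Defs.fsize ne ed).
Local Notation deg := (Defs.deg ne).
Local Notation sameV := (Defs.sameV ne).
Local Notation inFace := (Defs.inFace ne ed).

Lemma phi_inj : injective phi.
Proof. by move=> x y; rewrite /Defs.phi => /perm_inj/perm_inj. Qed.

Lemma sameV_sym x y : sameV x y = sameV y x.
Proof. exact: (fconnect_sym perm_inj). Qed.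

Lemma sameV_trans x y z : sameV x y -> sameV y z -> sameV x z.
Proof. exact: connect_trans. Qed.

Lemma sameV_refl x : sameV x x.
Proof. exact: connect0. Qed.

Lemma sameV_ne x : sameV x (ne x).
Proof. exact: fconnect1. Qed.

Lemma inFace_sym x y : inFace x y = inFace y x.
Proof. exact: (fconnect_sym phi_inj). Qed.

Lemma inFace_trans x y z : inFace x y -> inFace y z -> inFace x z.
Proof. exact: connect_trans. Qed.

Lemma inFace_phi x : inFace x (phi x).
Proof. exact: fconnect1. Qed.

Lemma fsize_inFace x y : inFace x y -> fsize y = fsize x.
Proof. exact: order_fconnect phi_inj. Qed.

Lemma fsize_phi x : fsize (phi x) = fsize x.
Proof. exact: fsize_inFace (inFace_phi x). Qed.

Lemma iter_fsize x : iter (fsize x) phi x = x.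
Proof. exact: (iter_order phi_inj). Qed.

Lemma iter_deg x : iter (deg x) ne x = x.
Proof. exact: (iter_order perm_inj). Qed.

Lemma sameV_traject x y : sameV x y -> y \in traject ne x (deg x).
Proof. by rewrite /Defs.sameV fconnect_orbit. Qed.

Lemma inFace_traject x y : inFace x y -> y \in traject phi x (fsize x).
Proof. by rewrite /Defs.inFace fconnect_orbit. Qed.

Lemma ne_finv x : ne (finv ne x) = x.
Proof. exact: (f_finv perm_inj). Qed.

Lemma triangle_phi3 x : fsize x = 3 -> phi (phi (phi x)) = x.
Proof. by move=> x3; have := iter_fsize x; rewrite x3. Qed.

Lemma triangle_ed_phi2 x : fsize x = 3 -> ed (phi (phi x)) = finv ne x.
Proof. by move=> x3; apply: (@perm_inj _ ne); rewrite ne_finv; exact: triangle_phi3. Qed.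

Hypothesis edK : involutive ed.
Hypothesis no_loop : forall x, ~~ sameV x (ed x).
Hypothesis no_multi_edge : forall x y, sameV x y -> sameV (ed x) (ed y) -> x = y.
Hypothesis deg_ge3 : forall x, 3 <= deg x.

Lemma phi_ed x : phi (ed x) = ne x.
Proof. by rewrite /Defs.phi edK. Qed.

Lemma fsize_ed x : fsize (ed x) = fsize (ne x).
Proof. by rewrite -phi_ed fsize_phi. Qed.

Lemma ne_neq x : ne x != x.
Proof.
have : uniq (traject ne x (deg x)) := orbit_uniq ne x.
have := deg_ge3 x; case: (deg x) => [|[|n]] //= _ /andP[x_notin _].
by apply: contraNneq x_notin => ->; rewrite inE eqxx.
Qed.

Lemma fsize_ge3 x : 3 <= fsize x.
Proof.
have := iter_fsize x; have := fingraph.order_gt0 phi x; rewrite -/(fsize x).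
case: (fsize x) => [|[|[|n]]] //= _ phiK.
- case/negP: (no_loop (ed x)); rewrite edK -[X in sameV _ X]phiK.
  exact: sameV_ne.
- have ne_edx : ne (ed x) = ed x.
    apply/esym/no_multi_edge; first exact: sameV_ne.
    by rewrite edK sameV_sym -[X in sameV _ X]phiK; exact: sameV_ne.
  by have := ne_neq (ed x); rewrite ne_edx eqxx.
Qed.

Hypothesis curv_pos : forall x, (0 < curv ne ed x)%R.

Local Open Scope ring_scope.
Local Notation inv_fsize y := ((fsize y)%:R^-1 : rat).

Lemma curvE x :
  curv ne ed x = 1 - (deg x)%:R / 2 + \sum_(y <- traject ne x (deg x)) inv_fsize y.
Proof. by []. Qed.

Lemma sum_inv_fsize_le (l : seq D) : \sum_(y <- l) inv_fsize y <= (size l)%:R / 3.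
Proof.
elim: l => [|y l IHl]; first by rewrite big_nil /= mul0r.
rewrite big_cons /= -addn1 natrD.
have := natr_mulV_le1 (fsize_ge3 y) isT; lra.
Qed.

Lemma deg_le5 x : (deg x <= 5)%N.
Proof.
have := sum_inv_fsize_le (traject ne x (deg x)); rewrite size_traject.
have := curv_pos x; rewrite curvE -ltnS -(ltr_nat rat); lra.
Qed.

Lemma positive_curvature x :
  [\/ [/\ deg x = 3%N, ne (ne (ne x)) = x &
          1 / 2 < inv_fsize x + inv_fsize (ne x) + inv_fsize (ne (ne x))],
      [/\ deg x = 4%N, ne (ne (ne (ne x))) = x &
          1 < inv_fsize x + inv_fsize (ne x) + inv_fsize (ne (ne x))
              + inv_fsize (ne (ne (ne x)))]
    | [/\ deg x = 5%N, ne (ne (ne (ne (ne x)))) = x &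
          3 / 2 < inv_fsize x + inv_fsize (ne x) + inv_fsize (ne (ne x))
                  + inv_fsize (ne (ne (ne x))) + inv_fsize (ne (ne (ne (ne x))))]].
Proof.
have : [|| deg x == 3, deg x == 4 | deg x == 5]%N.
  by have := deg_le5 x; have := deg_ge3 x; lia.
case/or3P=> /eqP E; have := iter_deg x; have := curv_pos x;
  rewrite curvE E [traject _ _ _]/= !big_cons big_nil => pos xK;
  [constructor 1|constructor 2|constructor 3]; (split; [by [] | exact: xK | lra]).
Qed.

Lemma inv_fsize_le_eq x k : fsize x = k -> (0 < k)%N -> k%:R * inv_fsize x <= 1.
Proof. by move=> <-; apply: natr_mulV_le1. Qed.

Lemma inv_fsize_le_ge x k : (k <= fsize x)%N -> (0 < k)%N -> k%:R * inv_fsize x <= 1.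
Proof. exact: natr_mulV_le1. Qed.

Lemma inv_fsize_le_neq3 x : fsize x != 3%N -> 4%:R * inv_fsize x <= 1.
Proof.
by move=> x_neq3; apply: natr_mulV_le1; rewrite // ltn_neqAle eq_sym x_neq3 fsize_ge3.
Qed.

(* Each 1/|f| becomes a variable r with k r <= 1, k the best known lower bound
   on |f|. *)
Ltac bound_inv_fsizes :=
  repeat match goal with
  | |- context [((Defs.fsize ne ed ?y)%:R)^-1] =>
    let b := fresh "b" in
    first [ match goal with E : Defs.fsize ne ed y = _ |- _ =>
              have b := inv_fsize_le_eq E isT end
          | match goal with H : is_true (_ <= Defs.fsize ne ed y)%N |- _ =>
              have b := inv_fsize_le_ge H isT end
          | match goal with H : is_true (Defs.fsize ne ed y != 3%N) |- _ =>
              have b := inv_fsize_le_neq3 H end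
          | have b := inv_fsize_le_ge (fsize_ge3 y) isT ];
    move: b; generalize ((Defs.fsize ne ed y)%:R^-1 : rat); intros ? ?
  end.

Ltac curvature_lra :=
  bound_inv_fsizes; move=> ?;
  (* lra fails on the nat comparisons of the context *)
  repeat match goal with
  | H : is_true (_ <= _)%N |- _ => clear H
  | H : @eq ?T _ _ |- _ => lazymatch T with rat => fail | _ => clear H end
  | H : is_true (_ != _) |- _ => clear H
  | H : ~ _ |- _ => clear H
  end; lra.

Lemma big_faces_two_apart x :
  (42 <= fsize x)%N -> (42 <= fsize (ne (ne x)))%N -> False.
Proof. by move=> ? ?; case: (positive_curvature x) => -[_ _]; curvature_lra. Qed.

Lemma big_hexagon_vertex x :
  (42 <= fsize x)%N /\ fsize (ne x) = 6%N \/ fsize x = 6%N /\ (42 <= fsize (ne x))%N ->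
  ne (ne (ne x)) = x /\ fsize (ne (ne x)) = 3%N.
Proof.
case: (positive_curvature x) => -[_ xK pos] sizes.
- split=> //; apply/eqP/negPn/negP => ?.
  by move: pos; case: sizes => -[? ?]; curvature_lra.
- by exfalso; move: pos; case: sizes => -[? ?]; curvature_lra.
- by exfalso; move: pos; case: sizes => -[? ?]; curvature_lra.
Qed.

(* The vertices of phi h and phi (phi h) have degree 3 and share a triangle,
   whose third vertex sees big faces at two corners two apart. *)
Lemma hexagon_big_neighbours h :
  fsize h = 6%N -> (42 <= fsize (ne h))%N -> (42 <= fsize (ne (phi (phi h))))%N -> False.
Proof.
move=> hex_h big_h big_h2.
set a := ed h; set e4 := phi h; set e5 := phi e4.
have ne_a : ne a = e4 by [].
have [aK a_tri] : ne (ne (ne a)) = a /\ fsize (ne (ne a)) = 3%N.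
  apply: big_hexagon_vertex; left.
  by rewrite ne_a fsize_phi /a fsize_ed.
have [e5K e5_tri] : ne (ne (ne e5)) = e5 /\ fsize (ne (ne e5)) = 3%N.
  by apply: big_hexagon_vertex; right; rewrite !fsize_phi.
have ed_e4 : ed e4 = ne (ne e5) by apply: (@perm_inj _ ne); rewrite e5K.
have phi_e5 : phi (ne (ne e5)) = ne (ne a) by rewrite -ed_e4 phi_ed ne_a.
have ed_a2 : ed (phi (ne (ne a))) = ne e5.
  apply: (@perm_inj _ ne); rewrite -[ne (ed _)]/(phi _).
  by rewrite -phi_e5 triangle_phi3.
apply: (@big_faces_two_apart (ed (ne (ne a)))); first by rewrite fsize_ed aK /a fsize_ed.
by rewrite -[ne (ed _)]/(phi _) -fsize_ed ed_a2.
Qed.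

(* The edge of dart x separates the faces of x and of ne x; the triangle at
   corner c is thus flanked at its vertex by the faces of ne c and finv ne c. *)
Lemma five_six_edge_at_triangle c x :
  fsize c = 3%N -> sameV c x ->
  fsize x = 5%N /\ fsize (ne x) = 6%N \/ fsize x = 6%N /\ fsize (ne x) = 5%N ->
  [\/ x = ne c /\ ne x = finv ne c, x = ne c /\ fsize (finv ne c) = 3%N
    | ne x = finv ne c /\ fsize (ne c) = 3%N].
Proof.
move=> tri_c /sameV_traject + sizes; rewrite /finv -/(deg c).
case: (positive_curvature c) => -[-> cK pos] /=; rewrite !inE.
- case/or3P=> /eqP x_eq; subst x; first (by exfalso; lia); last by rewrite cK in sizes; lia.
  by constructor 1.
- case/or4P=> /eqP x_eq; subst x; first (by exfalso; lia); last by rewrite cK in sizes; lia.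
  + constructor 2; split=> //; apply/eqP/negPn/negP => ?.
    by move: pos; case: sizes => -[? ?]; curvature_lra.
  + constructor 3; split=> //; apply/eqP/negPn/negP => ?.
    by move: pos; case: sizes => -[? ?]; curvature_lra.
- case/orP=> [|/or4P[]] /eqP x_eq; subst x; exfalso; first lia; last by rewrite cK in sizes; lia.
  all: by move: pos; case: sizes => -[? ?]; curvature_lra.
Qed.

Variable s : D.
Hypothesis sigma_big : (42 <= fsize s)%N.

Local Notation N := (fsize s).
Local Notation onSigma := (Defs.onSigma ne ed s).
Local Notation A1 := (Defs.A1 ne ed s).
Local Notation A5 := (Defs.A5 ne ed s).
Local Notation A6 := (Defs.A6 ne ed s).
Local Notation A156 := (Defs.A156 ne ed s).
Local Notation inT := (Defs.inT ne ed s).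
Local Notation C1 := (Defs.C1 ne ed s).
Local Notation C15 := (Defs.C15 ne ed s).
Local Notation C16 := (Defs.C16 ne ed s).
Local Notation Dset := (Defs.Dset ne ed s).

Lemma onSigma_sameV x y : sameV x y -> onSigma x -> onSigma y.
Proof.
move=> xy [z [xz sz]]; exists z; split=> //.
by apply: sameV_trans xz; rewrite sameV_sym.
Qed.

Lemma A156_onSigma u : A156 u -> onSigma u.
Proof. by case=> [[]|[[]|[]]]. Qed.

Lemma fmultE u : fmult ne ed u = map fsize (traject ne u (deg u)).
Proof. by []. Qed.

Lemma perm_fmult_deg u l : perm_eq (fmult ne ed u) l -> deg u = size l.
Proof. by move/perm_size; rewrite fmultE size_map size_traject. Qed.

Lemma A1_A5 u : A1 u -> A5 u -> False.
Proof. by case=> _ /perm_fmult_deg deg4 [_ /perm_fmult_deg]; rewrite deg4. Qed.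

Lemma A1_A6 u : A1 u -> A6 u -> False.
Proof. by case=> _ /perm_fmult_deg deg4 [_ /perm_fmult_deg]; rewrite deg4. Qed.

Lemma A5_A6 u : A5 u -> A6 u -> False.
Proof.
case=> _ fm5 [_ fm6]; rewrite perm_sym in fm5; have := perm_trans fm5 fm6.
by move/seq.permP/(_ (pred1 5%N)) => /=; lia.
Qed.

Lemma A6_triangle_corner u : A6 u -> fsize u = 3%N ->
  [/\ ne (ne (ne u)) = u, fsize (ne u) = 6%N -> fsize (ne (ne u)) = N
    & fsize (ne (ne u)) = 6%N -> fsize (ne u) = N].
Proof.
case=> _ fm u_tri; have degu := perm_fmult_deg fm.
have := iter_deg u; rewrite degu => uK; split=> //.
all: move/seq.permP: fm => /(_ (pred1 N)); rewrite fmultE degu /= u_tri; lia.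
Qed.

(* Size k of a face other than sigma next to the triangle corner u, as
   determined by the type of u (see A156_corner_flank). *)
Definition corner_flank (u : D) (k : nat) : Prop :=
  [\/ A1 u /\ k = 3%N, A5 u /\ k = 5%N | A6 u /\ k = 6%N].

Lemma corner_flank_A1 u : corner_flank u 3 -> A1 u.
Proof. by case=> -[]. Qed.

Lemma corner_flank_A5 u : corner_flank u 5 -> A5 u.
Proof. by case=> -[]. Qed.

Lemma corner_flank_A6 u : corner_flank u 6 -> A6 u.
Proof. by case=> -[]. Qed.

Lemma A1_corner_flank u k : A1 u -> corner_flank u k -> k = 3%N.
Proof. by move=> Au [[]|[/(A1_A5 Au)]|[/(A1_A6 Au)]]. Qed.

Lemma A6_corner_flank u k : A6 u -> corner_flank u k -> k = 6%N.
Proof. by move=> Au [[/A1_A6/(_ Au)]|[/A5_A6/(_ Au)]|[]]. Qed.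

Lemma A156_corner_flank u z : A156 u -> fsize u = 3%N -> sameV u z -> z != u ->
  ~ inFace s z -> corner_flank u (fsize z).
Proof.
move=> Au u_tri uz z_neq_u z_off.
have [y [uy sy]] := A156_onSigma Au.
have y_big : fsize y = N by exact: fsize_inFace.
have y_neq_z : y != z by apply: contra_not_neq z_off => <-.
have y_in := sameV_traject uy; have z_in := sameV_traject uz.
case: Au => [A|[A|A]]; [constructor 1|constructor 2|constructor 3]; split=> //;
  case: A => _ fm; have degu := perm_fmult_deg fm; rewrite degu /= !inE in y_in z_in;
  move/seq.permP: fm; rewrite fmultE degu.
- move/(_ (pred1 3%N)) => /= cnt.
  case/or4P: y_in => /eqP ?; subst y; case/or4P: z_in => /eqP ?; subst z;
    rewrite ?eqxx in z_neq_u y_neq_z => //; lia.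
- move/(_ (pred1 5%N)) => /= cnt.
  case/or3P: y_in => /eqP ?; subst y; case/or3P: z_in => /eqP ?; subst z;
    rewrite ?eqxx in z_neq_u y_neq_z => //; lia.
- move/(_ (pred1 6%N)) => /= cnt.
  case/or3P: y_in => /eqP ?; subst y; case/or3P: z_in => /eqP ?; subst z;
    rewrite ?eqxx in z_neq_u y_neq_z => //; lia.
Qed.

Lemma triangle_onSigma_corner t c a : fsize t = 3%N -> inFace t c -> ~ onSigma c ->
  inFace t a -> onSigma a -> a = phi c \/ a = phi (phi c).
Proof.
move=> t_tri tc c_off ta a_on.
have : a \in traject phi c (fsize c).
  by apply: inFace_traject; apply: inFace_trans ta; rewrite inFace_sym.
rewrite (fsize_inFace tc) t_tri /= !inE => /or3P[/eqP a_c|/eqP->|/eqP->]; [|by left|by right].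
by case: c_off; rewrite -a_c.
Qed.

Lemma inT_triangle_corners t c : inT t -> inFace t c -> ~ onSigma c ->
  [/\ fsize c = 3%N, corner_flank (phi c) (fsize (ne c))
    & corner_flank (phi (phi c)) (fsize (finv ne c))].
Proof.
move=> [t_tri [a [b [ta tb ab Aa Ab]]]] tc c_off.
have c_tri : fsize c = 3%N by rewrite (fsize_inFace tc).
have [A_c1 A_c2] : A156 (phi c) /\ A156 (phi (phi c)).
  have := triangle_onSigma_corner t_tri tc c_off ta (A156_onSigma Aa).
  have := triangle_onSigma_corner t_tri tc c_off tb (A156_onSigma Ab).
  by case=> b_eq [] a_eq; subst a b; rewrite ?sameV_refl in ab.
split=> //.
- rewrite -fsize_ed; apply: A156_corner_flank; rewrite ?fsize_phi //.
  + by rewrite sameV_sym; exact: sameV_ne.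
  + by rewrite eq_sym; exact: ne_neq.
  + move=> s_edc; apply: c_off; exists (ne c); split; first exact: sameV_ne.
    by rewrite -phi_ed; apply: inFace_trans s_edc (inFace_phi _).
- rewrite -(triangle_ed_phi2 c_tri) fsize_ed; apply: A156_corner_flank; rewrite ?fsize_phi //.
  + exact: sameV_ne.
  + exact: ne_neq.
  + move=> s_ne; apply: c_off; exists (ed (phi (phi c))); split.
      by rewrite sameV_sym -[X in sameV _ X](triangle_phi3 c_tri); exact: sameV_ne.
    by apply: inFace_trans s_ne _; rewrite -phi_ed inFace_sym; exact: inFace_phi.
Qed.

Lemma triangle_A1_A5 t c : inFace t c ->
  corner_flank (phi c) (fsize (ne c)) -> corner_flank (phi (phi c)) (fsize (finv ne c)) ->
  fsize (ne c) = 3%N /\ fsize (finv ne c) = 5%N \/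
  fsize (ne c) = 5%N /\ fsize (finv ne c) = 3%N ->
  exists a b, [/\ inFace t a, inFace t b, A1 a & A5 b].
Proof.
move=> tc fl1 fl2 sizes.
have tc1 : inFace t (phi c) := inFace_trans tc (inFace_phi c).
have tc2 : inFace t (phi (phi c)) := inFace_trans tc1 (inFace_phi _).
case: sizes => -[e1 e2]; rewrite e1 in fl1; rewrite e2 in fl2.
- by exists (phi c), (phi (phi c)); split; [| | exact: corner_flank_A1 | exact: corner_flank_A5].
- by exists (phi (phi c)), (phi c); split; [| | exact: corner_flank_A1 | exact: corner_flank_A5].
Qed.

Lemma A6_corners_no_common_hexagon c c' :
  fsize c = 3%N -> fsize c' = 3%N -> A6 (phi c') -> A6 (phi (phi c)) ->
  fsize (ne c') = 6%N -> phi (ne c') = finv ne c -> False.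
Proof.
move=> c_tri c'_tri A6_1 A6_2 hex_c' phi_c'.
set u1 := phi c'; set u2 := phi (phi c); set h := ne u2.
have [u1K _ big_u1] := A6_triangle_corner A6_1 (etrans (fsize_phi c') c'_tri).
have [_ big_u2 _] := A6_triangle_corner A6_2 (etrans (fsize_phi _) (etrans (fsize_phi c) c_tri)).
have ed_c' : ne (ne u1) = ed c' by apply: (@perm_inj _ ne); rewrite u1K.
have N_u1 : fsize (ne u1) = N by apply: big_u1; rewrite ed_c' fsize_ed.
have ed_u2 : ed u2 = finv ne c := triangle_ed_phi2 c_tri.
have hex_h : fsize h = 6%N by rewrite -fsize_ed ed_u2 -phi_c' fsize_phi.
have N_h : fsize (ne h) = N := big_u2 hex_h.
have phi2_c' : phi (phi (ne c')) = h by rewrite phi_c' -ed_u2 phi_ed.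
have phi4_h : phi (phi (phi (phi h))) = ne c'.
  apply: phi_inj; apply: phi_inj.
  by rewrite phi2_c'; have := iter_fsize h; rewrite hex_h.
have ed_phi3 : ed (phi (phi (phi h))) = c' by apply: (@perm_inj _ ne).
have ed_phi2 : ed (phi (phi h)) = ne u1.
  by apply: (@perm_inj _ ne); rewrite ed_c' -ed_phi3 edK.
apply: (hexagon_big_neighbours hex_h); first by rewrite N_h.
by rewrite -fsize_ed ed_phi2 N_u1.
Qed.

Lemma C16_five_six_edge v' y : C16 v' -> sameV v' y ->
  fsize y = 5%N /\ fsize (ne y) = 6%N \/ fsize y = 6%N /\ fsize (ne y) = 5%N ->
  exists2 c', fsize c' = 3%N &
    y = ne c' /\ fsize y = 6%N /\ A6 (phi c') \/
    ne y = finv ne c' /\ fsize (ne y) = 6%N /\ A6 (phi (phi c')).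
Proof.
move=> [[v'_off _] [t [Tt [c' [tc' c'v']] [a [b [ta tb Aa Ab]]]]]] v'y sizes.
have c'_off : ~ onSigma c' := fun on => v'_off (onSigma_sameV c'v' on).
have [c'_tri fl1 fl2] := inT_triangle_corners Tt tc' c'_off.
have flanks : fsize (ne c') = 3%N /\ fsize (finv ne c') = 6%N /\ A6 (phi (phi c')) \/
              fsize (ne c') = 6%N /\ A6 (phi c') /\ fsize (finv ne c') = 3%N.
  have [t_tri _] := Tt.
  have [a_eq|a_eq] := triangle_onSigma_corner t_tri tc' c'_off ta (A156_onSigma (or_introl Aa));
  have [b_eq|b_eq] := triangle_onSigma_corner t_tri tc' c'_off tb
                        (A156_onSigma (or_intror (or_intror Ab))); subst a b;
    try by case: (A1_A6 Aa Ab).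
  - by left; rewrite (A1_corner_flank Aa fl1) (A6_corner_flank Ab fl2).
  - by right; rewrite (A1_corner_flank Aa fl2) (A6_corner_flank Ab fl1).
exists c' => //.
have [[y_eq ne_y]|[y_eq fin3]|[ne_y ne3]] :=
  five_six_edge_at_triangle c'_tri (sameV_trans c'v' v'y) sizes.
- by exfalso; subst y; rewrite ne_y in sizes; case: flanks => -[? [? ?]]; lia.
- by subst y; case: flanks => -[? [? ?]]; [lia | left].
- by case: flanks => -[? [? ?]]; [right; rewrite ne_y | lia].
Qed.

Lemma C1_Dset_C15 v : C1 v -> Dset v -> C15 v.
Proof.
move=> C1v [x [vx C16x sizes]]; split=> // t Tt [c [tc cv]].
have c_off : ~ onSigma c := fun on => C1v.1 (onSigma_sameV cv on).
have [c_tri fl1 fl2] := inT_triangle_corners Tt tc c_off.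
have sizes_x : fsize x = 5%N /\ fsize (ne x) = 6%N \/ fsize x = 6%N /\ fsize (ne x) = 5%N.
  by rewrite -fsize_ed; case/orP: sizes => /andP[/eqP-> /eqP->]; [left|right].
have sizes_edx : fsize (ed x) = 5%N /\ fsize (ne (ed x)) = 6%N \/
                 fsize (ed x) = 6%N /\ fsize (ne (ed x)) = 5%N.
  by rewrite fsize_ed -[ne (ed x)]/(phi x) fsize_phi; case: sizes_x => -[-> ->]; [right|left].
have at_v := five_six_edge_at_triangle c_tri (sameV_trans cv vx) sizes_x.
have [c' c'_tri [[edx_eq [hex_edx A6_c']]|[ne_edx [hex_x A6_c']]]] :=
  C16_five_six_edge C16x (sameV_refl _) sizes_edx.
- have hex_nex : fsize (ne x) = 6%N by rewrite -fsize_ed.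
  have [x_eq fin3] : x = ne c /\ fsize (finv ne c) = 3%N.
    case: at_v => [[_ ne_x]|//|[ne_x _]]; exfalso;
    (apply: (A6_corners_no_common_hexagon c_tri c'_tri A6_c');
       [by apply: corner_flank_A6; rewrite -hex_nex ne_x
       | by rewrite -edx_eq
       | by rewrite -edx_eq phi_ed ne_x]).
  apply: triangle_A1_A5 tc fl1 fl2 _; right; rewrite -x_eq; split=> //; lia.
- have hex_x' : fsize x = 6%N by rewrite -hex_x -[ne (ed x)]/(phi x) fsize_phi.
  have [ne_x ne3] : ne x = finv ne c /\ fsize (ne c) = 3%N.
    case: at_v => [[x_eq _]|[x_eq _]|//]; exfalso; subst x;
    (apply: (A6_corners_no_common_hexagon c'_tri c_tri _ A6_c' hex_x' ne_edx);
       by apply: corner_flank_A6; rewrite -hex_x').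
  apply: triangle_A1_A5 tc fl1 fl2 _; left; rewrite -ne_x; split=> //; lia.
Qed.

End CombinatorialMap.

Theorem lemma13p4 (D : finType) (ne ed : {perm D}) (s : D) :
  planar_PCC ne ed -> 42 <= fsize ne ed s ->
  forall v : D, C1 ne ed s v -> Dset ne ed s v -> C15 ne ed s v.
Proof.
move=> [[[edK _] no_loop no_multi_edge _ _] curv_deg _ _] sigma_big.
have deg_ge3 x : 3 <= deg ne x by case: (curv_deg x).
have curv_pos x : (0 < curv ne ed x)%R by case: (curv_deg x).
exact: (C1_Dset_C15 edK no_loop no_multi_edge deg_ge3 curv_pos sigma_big).
Qed.
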